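(* Assume $(q+1)/d=3$, let $r$ be an integer, $a,b\in\mathbb F_{q^2}^*$, $0\le j_1,j_2<d$, and put $h(X)=1+aX^{1+3j_1}+bX^{2+3j_2}$ and $L_k(X)=1+a\epsilon^{j_1k}X+b\epsilon^{j_2k}X^2$ for $0\le k<d$. Suppose that for every $0\le k<d$ there exist $\tau_k\in\{0,1,2\}$ and $\lambda_k\in\mu_{q+1}$ with $L_k\in\mathcal L_k(2,\tau_k;\lambda_k)$, and that $\gcd(e_k,3)=1$ where $e_k=r-2+\tau_k$. Define $\pi(k)\in\mathbb Z/d\mathbb Z$ by $\lambda_k^3=\epsilon^{\pi(k)}$, and $K_0=\{k:\tau_k=0\}$, $K_1=\{k:\tau_k=2\}$. If $K_0\neq\emptyset$ and $K_1\ne\emptyset$, then $r\equiv1\pmod3$, $d$ is even, $K_0$ and $K_1$ are the two cosets of $2\mathbb Z/d\mathbb Z$ in $\mathbb Z/d\mathbb Z$, $a^3=-1$, $b=\pm a^2$, $2j_1-j_2\equiv d/2\pmod d$, $j_1+j_2+1\equiv d/2\pmod d$, and $\pi(k)+e_kk=rk$ in $\mathbb Z/d\mathbb Z$ for all $k$. Moreover, either $q\equiv11\pmod{18}$ and $h(X)=1+aX^{(q+1)/3}+bX^{(q+1)/6}$, or $q\equiv5\pmod{18}$ and $h(X)=1+aX^{2(q+1)/3}+bX^{5(q+1)/6}$.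
   Context: $q$ is a prime power, $d$ is a positive divisor of $q+1$, and $\epsilon\in\mathbb F_{q^2}^*$ has multiplicative order $d$. $\mu_{q+1}$ is the subgroup of order $q+1$ of $\mathbb F_{q^2}^*$. For $a\in\mathbb F_{q^2}$, $\bar a=a^q$; for $f(X)=\sum_{i=0}^n a_iX^i\in\mathbb F_{q^2}[X]$ with $a_n\neq0$, $\tilde f(X)=\sum_{i=0}^n\bar a_iX^{n-i}$. For $0\le k<d$, $0\le t<(q+1)/d$ and $\lambda\in\mu_{q+1}$: $\mathcal L_k(t,0;\lambda)$ is the set of $L\in\mathbb F_{q^2}[X]$ with $\deg L=t$, $\tilde L=\lambda L$ and $\gcd(L,X^{(q+1)/d}-\epsilon^k)=1$; for an integer $\tau$ with $(q+1)/d-t\le\tau\le t$, $\mathcal L_k(t,\tau;\lambda)$ is the set of $L=P+X^{(q+1)/d-\tau}Q$ with $P,Q\in\mathbb F_{q^2}[X]$, $\deg P=t-\tau$, $\tilde P=\lambda P$, $\deg Q=\tau+t-(q+1)/d$, $\tilde Q=\lambda\epsilon^kQ$, and $\gcd(L,X^{(q+1)/d}-\epsilon^k)=1$. *)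

From HB Require Import structures.
From mathcomp Require Import all_boot all_order all_algebra all_field.
Set Implicit Arguments. Unset Strict Implicit. Unset Printing Implicit Defensive.
Import GRing.Theory.
Local Open Scope ring_scope.

(* F plays the role of F_{q^2}; conjugation is a |-> a^q. *)
Definition conjq (F : finFieldType) (q : nat) (a : F) : F := a ^+ q.

Definition tildep (F : finFieldType) (q : nat) (f : {poly F}) : {poly F} :=
  \poly_(i < size f) conjq q f`_((size f).-1 - i).

Definition in_mu (F : finFieldType) (q : nat) (x : F) : Prop := x ^+ q.+1 = 1.

Definition calL (F : finFieldType) (q d : nat) (eps : F) (k t tau : nat)
    (lam : F) (L : {poly F}) : Prop :=
  let m := (q.+1 %/ d)%N in
  coprimep L ('X^m - (eps ^+ k)%:P) /\
  if tau == 0%N then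
    size L = t.+1 /\ tildep q L = lam *: L
  else
    [/\ (m - t <= tau <= t)%N &
      exists P Q : {poly F},
        [/\ size P = (t - tau).+1, tildep q P = lam *: P,
            size Q = (tau + t - m).+1, tildep q Q = (lam * eps ^+ k) *: Q &
            L = P + 'X^(m - tau) * Q]].

From HB Require Import structures.
From mathcomp Require Import all_boot all_order all_algebra all_field.
From mathcomp Require Import zify ring.
Set Implicit Arguments. Unset Strict Implicit. Unset Printing Implicit Defensive.
Import GRing.Theory.
Local Open Scope ring_scope.

(* Write L_k = 1 + A_k X + B_k X^2 with A_k = a eps^(j1 k) and B_k = b eps^(j2 k).
   Coprimality of e_k with 3 for some k with tau_k = 0 and some k with tau_k = 2
   gives r = 1 (mod 3), which in turn rules out tau_k = 1.  Comparing coefficients,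
   tau_k = 0 means B_k^q = lambda_k, A_k^q = lambda_k A_k, lambda_k B_k = 1, and
   tau_k = 2 means B_k^q = eps^k A_k, A_k^q = eps^k B_k.  Hence a and b lie in
   mu_(q+1), and then tau_k = 0 forces B_k = A_k^2 while tau_k = 2 forces
   A_k B_k eps^k = 1.  Both at once is impossible: L_k would divide X^3 - eps^k.
   Each condition has the shape c g^k = 1 for a d-th root of unity g, namely
   g0 = eps^(j2 - 2 j1) and g1 = eps^(j1 + j2 + 1).  If exactly one of two such
   conditions holds for every k and each holds for some k, they alternate with the
   parity of k and g0 = g1 = -1; the whole conclusion is read off from this. *)

Lemma coprimez3 (x : int) : coprimez x 3 = ~~ (3 %| x)%Z.
Proof. by rewrite coprimezE coprime_sym prime_coprime // dvdzE. Qed.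

Section Quadratic.
Variable F : fieldType.

Definition quad (A B : F) : {poly F} := 1 + A *: 'X + B *: 'X^2.

Lemma coef_quad A B i :
  (quad A B)`_i = if i == 0%N then 1 else if i == 1%N then A else if i == 2%N then B else 0.
Proof.
rewrite !coefD !coefZ coef1 coefX coefXn.
by case: i => [|[|[|i]]] /=; rewrite ?mulr0 ?mulr1 ?addr0 ?add0r.
Qed.

Lemma size_quad A B : B != 0 -> size (quad A B) = 3%N.
Proof.
move=> B0; apply/eqP; rewrite eqn_leq; apply/andP; split.
  by apply/leq_sizeP => -[|[|[|i]]] //= _; rewrite coef_quad.
rewrite ltnNge; apply/negP => /leq_sizeP /(_ 2%N (leqnn _)) /eqP.
by rewrite coef_quad (negbTE B0).
Qed.

Lemma quad_sq_dvd_cube A c : A ^+ 3 * c = 1 -> quad A (A ^+ 2) %| 'X^3 - c%:P.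
Proof.
move=> Ac; apply/dvdpP; exists (c%:P * (A%:P * 'X - 1)).
have X3 : 'X^3 = c%:P * A%:P ^+ 3 * 'X^3 :> {poly F}.
  by rewrite -rmorphXn -rmorphM /= [c * _]mulrC Ac mul1r.
rewrite /quad -!mul_polyC rmorphXn /= {1}X3.
by ring.
Qed.

Lemma quad_sq_not_coprime_cube A c :
  A ^+ 3 * c = 1 -> ~~ coprimep (quad A (A ^+ 2)) ('X^3 - c%:P).
Proof.
move=> Ac; apply/negP => /(coprimep_dvdl (quad_sq_dvd_cube Ac)).
have A0 : A != 0.
  by apply: contraPneq Ac => ->; rewrite expr0n mul0r => /esym/eqP; rewrite oner_eq0.
by rewrite coprimepp size_quad // expf_neq0.
Qed.
End Quadratic.

Section Conjugation.
Variables (F : finFieldType) (q d : nat) (eps : F) (k : nat) (lam A B : F).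

Lemma calL_quad_tau0 : B != 0 -> calL q d eps k 2 0 lam (quad A B) ->
  [/\ B ^+ q = lam, A ^+ q = lam * A & lam * B = 1].
Proof.
move=> B0 [_ [_ tildeL]]; have C i := congr1 (fun p : {poly F} => p`_i) tildeL.
move: (C 0%N) (C 1%N) (C 2%N).
rewrite /tildep !coef_poly size_quad // !coefZ !coef_quad /conjq /=.
by rewrite expr1n mulr1 => -> -> ->.
Qed.

Lemma calL_quad_tau2 : (q.+1 %/ d = 3)%N -> calL q d eps k 2 2 lam (quad A B) ->
  [/\ lam = 1, B ^+ q = eps ^+ k * A & A ^+ q = eps ^+ k * B].
Proof.
move=> m3 [_]; rewrite m3 /= => -[_ [P [Q [sP tildeP sQ tildeQ L_PQ]]]].
have P_const i : (0 < i)%N -> P`_i = 0.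
  by move=> i_gt0; apply: (leq_sizeP _ _ (eq_leq sP)).
have C i := congr1 (fun p : {poly F} => p`_i) L_PQ.
move: (C 0%N) (C 1%N) (C 2%N); rewrite !coef_quad !coefD !coefXnM /= !subn1 /=.
rewrite (P_const 1%N) // (P_const 2%N) // !add0r addr0 => P0 QA QB.
have CP := congr1 (fun p : {poly F} => p`_0) tildeP.
have CQ i := congr1 (fun p : {poly F} => p`_i) tildeQ.
move: CP (CQ 0%N) (CQ 1%N); rewrite /tildep !coef_poly sP sQ !coefZ /conjq /=.
rewrite -P0 expr1n mulr1 => <-; rewrite !mul1r.
by rewrite -QA -QB => -> ->.
Qed.

End Conjugation.

Section GeometricHits.
Variable F : fieldType.

Lemma geom_hit_next (c g : F) k : g != 1 -> c * g ^+ k = 1 -> c * g ^+ k.+1 != 1.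
Proof. by move=> g1 hit; rewrite exprSr mulrA hit mul1r. Qed.

Lemma geom_hit_twice (c g : F) k :
  g != 1 -> c * g ^+ k = 1 -> c * g ^+ k.+2 = 1 -> g = -1.
Proof.
move=> g1 hit; rewrite -addn2 exprD mulrA hit mul1r.
by move/eqP; rewrite sqrf_eq1 (negbTE g1) => /eqP.
Qed.

Lemma geom_hit_sign (c : F) k : c * (-1) ^+ k = 1 -> c = (-1) ^+ k.
Proof. by move=> hit; rewrite -[c](signrMK k) [_ * c]mulrC hit mulr1. Qed.

Variables (d : nat) (c0 g0 c1 g1 : F).
Hypotheses (d_gt0 : (0 < d)%N) (g0_d : g0 ^+ d = 1) (g1_d : g1 ^+ d = 1).
Local Notation X k := (c0 * g0 ^+ k == 1).
Local Notation Y k := (c1 * g1 ^+ k == 1).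
Hypothesis X_xor_Y : forall k, (k < d)%N -> X k = ~~ Y k.
Variables k0 k1 : nat.
Hypotheses (X_k0 : X k0) (Y_k1 : Y k1).

Let X_xor_Y_all k : X k = ~~ Y k.
Proof. by have := X_xor_Y (ltn_pmod k d_gt0); rewrite !expr_mod. Qed.

Let g0_neq1 : g0 != 1.
Proof.
apply: contraTneq Y_k1 => g0_1; move: X_k0; rewrite g0_1 expr1n => c0_1.
by rewrite -[Y k1]negbK -X_xor_Y_all g0_1 expr1n c0_1.
Qed.

Let g1_neq1 : g1 != 1.
Proof.
apply: contraTneq X_k0 => g1_1; move: Y_k1; rewrite g1_1 expr1n => c1_1.
by rewrite X_xor_Y_all g1_1 expr1n c1_1.
Qed.

Let X_next k : X k.+1 = ~~ X k.
Proof.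
have [Xk|nXk] := boolP (X k).
  by apply/negbTE/geom_hit_next => //; apply/eqP.
rewrite X_xor_Y_all; apply/negPn/negP/geom_hit_next => //; apply/eqP.
by move: nXk; rewrite X_xor_Y_all negbK.
Qed.

Let X_parity k : X k = X 0 (+) odd k.
Proof. by elim: k => [|k IH]; rewrite ?addbF // X_next IH addbN. Qed.

Lemma geom_alternation :
  [/\ ~~ odd d, g0 = -1 /\ g1 = -1, c0 = (-1) ^+ k0 /\ c1 = (-1) ^+ k0.+1
    & forall k, X k = (odd k == odd k0)].
Proof.
have X_next2 k : X k.+2 = X k by rewrite !X_next negbK.
have Y_next2 k : Y k.+2 = Y k.
  by rewrite -[Y k.+2]negbK -X_xor_Y_all X_next2 X_xor_Y_all negbK.
have g0E : g0 = -1.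
  by apply: (geom_hit_twice (c := c0) (k := k0)) => //; apply/eqP; rewrite ?X_next2.
have g1E : g1 = -1.
  by apply: (geom_hit_twice (c := c1) (k := k1)) => //; apply/eqP; rewrite ?Y_next2.
split=> [||| k].
- have := X_parity d; rewrite g0_d expr0.
  by case: (odd d); case: (c0 * 1 == 1).
- by [].
- split; apply: geom_hit_sign; apply/eqP; first by rewrite -g0E.
  by rewrite -g1E -[Y _]negbK -X_xor_Y_all X_next negbK.
- move: (X_parity k) (X_parity k0); rewrite X_k0.
  by case: (X 0) (odd k) (odd k0) => [] [] [].
Qed.

End GeometricHits.

Lemma divf_eq1 (F : fieldType) (x y : F) : y != 0 -> (x / y == 1) = (x == y).
Proof. by move=> y0; rewrite -(inj_eq (mulIf y0)) divfK // mul1r. Qed.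

Lemma prim_root_half (R : idomainType) n (z : R) :
  n.-primitive_root z -> ~~ odd n -> z ^+ (n %/ 2) = -1.
Proof.
move=> z_prim n_even; have n_gt0 := prim_order_gt0 z_prim.
have n_half : n = (n %/ 2 * 2)%N by rewrite divnK // dvdn2.
have : (z ^+ (n %/ 2)) ^+ 2 = 1 by rewrite -exprM -n_half prim_expr_order.
move/eqP; rewrite sqrf_eq1 -(prim_order_dvd z_prim) => /orP[/dvdn_leq|/eqP //].
lia.
Qed.

Section QuadraticFamily.
Variables (F : finFieldType) (q d : nat) (eps a b : F) (r : int).
Variables (j1 j2 : nat) (tau : nat -> nat) (lam : nat -> F) (k0 k2 : nat).
Hypotheses (q1_3d : q.+1 = (3 * d)%N) (eps_prim : d.-primitive_root eps).
Hypotheses (a0 : a != 0) (b0 : b != 0).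
Local Notation A k := (a * eps ^+ (j1 * k)).
Local Notation B k := (b * eps ^+ (j2 * k)).
Hypothesis L_spec : forall k, (k < d)%N ->
  [/\ (tau k <= 2)%N, calL q d eps k 2 (tau k) (lam k) (quad (A k) (B k))
    & coprimez (r - 2 + (tau k)%:Z) 3].
Hypotheses (k0_lt : (k0 < d)%N) (tau_k0 : tau k0 = 0%N).
Hypotheses (k2_lt : (k2 < d)%N) (tau_k2 : tau k2 = 2%N).

Let d_gt0 : (0 < d)%N := prim_order_gt0 eps_prim.
Let eps_d : eps ^+ d = 1 := prim_expr_order eps_prim.
Let m3 : (q.+1 %/ d = 3)%N. Proof. by rewrite q1_3d mulnK. Qed.
Let eps_q1 : eps ^+ q.+1 = 1. Proof. by rewrite q1_3d mulnC exprM eps_d expr1n. Qed.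
Let eps0 : eps != 0. Proof. by rewrite (prim_root_eq0 eps_prim) -lt0n. Qed.

Let r_mod3 : (r = 1 %[mod 3])%Z.
Proof.
have [_ _] := L_spec k0_lt; have [_ _] := L_spec k2_lt.
rewrite tau_k0 tau_k2 !coprimez3; lia.
Qed.

Let tau_0_or_2 k : (k < d)%N -> tau k = 0%N \/ tau k = 2%N.
Proof.
move=> k_lt; have [] := L_spec k_lt; have := r_mod3.
by case: (tau k) => [|[|[|]]] // r1 _ _; [left | rewrite coprimez3; lia | right].
Qed.

Let tau0_eqs k : (k < d)%N -> tau k = 0%N ->
  [/\ B k ^+ q = lam k, A k ^+ q = lam k * A k & lam k * B k = 1].
Proof.
move=> k_lt tau_k; have [_ + _] := L_spec k_lt; rewrite tau_k.
by apply: calL_quad_tau0; rewrite mulf_neq0 // expf_neq0.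
Qed.

Let tau2_eqs k : (k < d)%N -> tau k = 2%N ->
  [/\ lam k = 1, B k ^+ q = eps ^+ k * A k & A k ^+ q = eps ^+ k * B k].
Proof.
by move=> k_lt tau_k; have [_ + _] := L_spec k_lt; rewrite tau_k; apply: calL_quad_tau2.
Qed.

Let norm_twist c j k : (c * eps ^+ (j * k)) ^+ q.+1 = c ^+ q.+1.
Proof. by rewrite exprMn exprAC eps_q1 expr1n mulr1. Qed.

Let b_norm : b ^+ q.+1 = 1.
Proof.
by have [Bq _ lamB] := tau0_eqs k0_lt tau_k0; rewrite -(norm_twist _ j2 k0) exprSr Bq.
Qed.

Let a_norm : a ^+ q.+1 = 1.
Proof.
have [_ Bq _] := tau2_eqs k2_lt tau_k2.
have : (B k2 ^+ q) ^+ q.+1 = 1 by rewrite exprAC norm_twist b_norm expr1n.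
by rewrite Bq exprMn exprAC eps_q1 expr1n mul1r norm_twist.
Qed.

Let unit_norm c j k : c ^+ q.+1 = 1 -> (c * eps ^+ (j * k)) ^+ q * (c * eps ^+ (j * k)) = 1.
Proof. by move=> c1; rewrite -exprSr norm_twist. Qed.

Let sq_of_tau0 k : (k < d)%N -> tau k = 0%N -> B k = A k ^+ 2.
Proof.
move=> k_lt tau_k; have [_ Aq lamB] := tau0_eqs k_lt tau_k.
have lam0 : lam k != 0.
  by apply: contraPneq lamB => ->; rewrite mul0r => /esym/eqP; rewrite oner_eq0.
apply: (mulfI lam0); rewrite lamB -(unit_norm j1 k a_norm) Aq.
by rewrite -mulrA -expr2.
Qed.

Let inv_of_tau2 k : (k < d)%N -> tau k = 2%N -> A k * B k * eps ^+ k = 1.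
Proof.
move=> k_lt tau_k; have [_ _ Aq] := tau2_eqs k_lt tau_k.
by rewrite -(unit_norm j1 k a_norm) Aq; ring.
Qed.

Let sq_xor_inv k : (k < d)%N -> (B k == A k ^+ 2) = ~~ (A k * B k * eps ^+ k == 1).
Proof.
move=> k_lt; have not_both : B k = A k ^+ 2 -> A k * B k * eps ^+ k != 1.
  move=> sq; apply/eqP => inv; have [_ [+ _] _] := L_spec k_lt.
  by rewrite m3 sq; apply/negP/quad_sq_not_coprime_cube; rewrite -inv sq; ring.
case: (tau_0_or_2 k_lt) => tau_k.
  have sq := sq_of_tau0 k_lt tau_k.
  by move: (not_both sq); rewrite sq eqxx => /negbTE ->.
have inv := inv_of_tau2 k_lt tau_k.
by rewrite inv eqxx /=; apply/negP => /eqP /not_both; rewrite inv eqxx.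
Qed.

Let g0 := eps ^+ j2 / eps ^+ (2 * j1).
Let g1 := eps ^+ (j1 + j2 + 1).

Let sq_hit k : (B k == A k ^+ 2) = (b / a ^+ 2 * g0 ^+ k == 1).
Proof.
rewrite expr_div_n mulf_div divf_eq1 ?mulf_neq0 ?expf_neq0 //.
by rewrite exprMn -!exprM [(_ * 2)%N]mulnC mulnA.
Qed.

Let inv_hit k : (A k * B k * eps ^+ k == 1) = (a * b * g1 ^+ k == 1).
Proof. by rewrite /g1 -exprM !mulnDl mul1n !exprD; congr (_ == 1); ring. Qed.

Let g0_d : g0 ^+ d = 1.
Proof. by rewrite expr_div_n !(exprAC eps _ d) eps_d !expr1n divr1. Qed.

Let g1_d : g1 ^+ d = 1.
Proof. by rewrite exprAC eps_d expr1n. Qed.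

Let hits_xor k : (k < d)%N -> (b / a ^+ 2 * g0 ^+ k == 1) = ~~ (a * b * g1 ^+ k == 1).
Proof. by rewrite -sq_hit -inv_hit; exact: sq_xor_inv. Qed.

Let hit_k0 : b / a ^+ 2 * g0 ^+ k0 == 1.
Proof. by rewrite -sq_hit sq_of_tau0. Qed.

Let hit_k2 : a * b * g1 ^+ k2 == 1.
Proof. by rewrite -inv_hit inv_of_tau2. Qed.

Let alternation := geom_alternation d_gt0 g0_d g1_d hits_xor hit_k0 hit_k2.

Let eps_j2 : eps ^+ j2 = - eps ^+ (2 * j1).
Proof.
have [_ [+ _] _ _] := alternation; rewrite /g0 => /(canRL (divfK _)) ->.
  by rewrite mulN1r.
by rewrite expf_neq0.
Qed.

Let eps_j1j2 : eps ^+ (j1 + j2 + 1) = -1.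
Proof. by have [_ [_ g1E] _ _] := alternation. Qed.

Let b_sign : b = a ^+ 2 * (-1) ^+ k0.
Proof.
have [_ _ [+ _] _] := alternation => /(canRL (divfK _)) ->; last by rewrite expf_neq0.
by rewrite mulrC.
Qed.

Let a_cube : a ^+ 3 = -1.
Proof.
have [_ _ [_ +] _] := alternation; rewrite b_sign [(-1) ^+ k0.+1]exprS mulrA -exprS.
by move/(mulIf (negbT (signr_eq0 _ k0))).
Qed.

Let tau_parity k : (k < d)%N ->
  (tau k = 0%N <-> ~~ (odd k0 (+) odd k)) /\ (tau k = 2%N <-> odd k0 (+) odd k).
Proof.
move=> k_lt; have [_ _ _ parity] := alternation.
have tau0_sq : (tau k == 0%N) = ~~ (odd k0 (+) odd k).
  have -> : ~~ (odd k0 (+) odd k) = (odd k == odd k0) by case: (odd k0) (odd k) => [] [].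
  rewrite -parity -sq_hit.
  case: (tau_0_or_2 k_lt) => tau_k; rewrite tau_k.
    by rewrite sq_of_tau0 ?eqxx.
  by rewrite sq_xor_inv ?inv_of_tau2 ?eqxx.
rewrite -[odd k0 (+) odd k]negbK -tau0_sq negbK.
by case: (tau_0_or_2 k_lt) => ->.
Qed.

Let eps_3j1 : eps ^+ (3 * j1).+1 = 1.
Proof.
have e2 : eps ^+ j2 = - (eps ^+ j1) ^+ 2 by rewrite eps_j2 mulnC exprM.
have -> : ((3 * j1).+1 = j1 + j1 * 2 + 1)%N by lia.
apply: oppr_inj; rewrite -eps_j1j2 !exprD e2 exprM; ring.
Qed.

Let lam_cube k : (k < d)%N -> lam k ^+ 3 = eps ^+ ((2 - tau k) * k).
Proof.
move=> k_lt; case: (tau_0_or_2 k_lt) => tau_k; rewrite tau_k; last first.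
  by have [-> _ _] := tau2_eqs k_lt tau_k; rewrite expr1n.
have [_ _ lamB] := tau0_eqs k_lt tau_k; have sq := sq_of_tau0 k_lt tau_k.
have A3 : A k ^+ 3 * eps ^+ k = -1.
  rewrite exprMn a_cube -exprM -mulrA -exprD.
  have -> : (j1 * k * 3 + k = (3 * j1).+1 * k)%N by nia.
  by rewrite exprM eps_3j1 expr1n mulr1.
have B3 : B k ^+ 3 != 0 by rewrite expf_neq0 // mulf_neq0 // expf_neq0.
apply: (mulIf B3); rewrite -exprMn lamB expr1n sq -exprM subn0.
rewrite [(2 * 3)%N]mulnC [(2 * k)%N]mulnC (exprM _ 3 2) (exprM eps k 2) -exprMn mulrC A3.
by rewrite sqrrN expr1n.
Qed.

Lemma quad_family_normal_form :
  [/\ (r = 1 %[mod 3])%Z, ~~ odd d, a ^+ 3 = -1 /\ b = a ^+ 2 * (-1) ^+ k0,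
      eps ^+ j2 = - eps ^+ (2 * j1) /\ eps ^+ (j1 + j2 + 1) = -1
    & forall k, (k < d)%N ->
      [/\ tau k = 0%N <-> ~~ (odd k0 (+) odd k), tau k = 2%N <-> odd k0 (+) odd k
        & lam k ^+ 3 = eps ^+ ((2 - tau k) * k)]].
Proof.
split=> //; first by have [] := alternation.
by move=> k k_lt; have [] := tau_parity k_lt; split=> //; exact: lam_cube.
Qed.

End QuadraticFamily.

Lemma congr_half_sub (d t j1 j2 : nat) : d = (2 * t)%N ->
  (j2 = t + 2 * j1 %[mod d])%N -> ((2 * j1)%:Z - j2%:Z = t %[mod d])%Z.
Proof.
move=> d_2t j2_mod; apply/eqP; rewrite eqz_mod_dvd.
have : (d %| j2%:Z - (t + 2 * j1)%N%:Z)%Z by rewrite -eqz_mod_dvd !modz_nat j2_mod.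
have -> : (2 * j1)%:Z - j2%:Z - t%:Z = - (j2%:Z - (t + 2 * j1)%N%:Z) - d%:Z by lia.
by move=> dvd_j2; rewrite rpredB ?rpredN // dvdzz.
Qed.

Lemma congr_twist (d t pik k : nat) (r : int) : (t <= 2)%N ->
  (pik = (2 - t) * k %[mod d])%N ->
  (pik%:Z + (r - 2 + t%:Z) * k%:Z = r * k%:Z %[mod d])%Z.
Proof.
move=> t_le2 pik_mod; apply/eqP; rewrite eqz_mod_dvd.
have -> : pik%:Z + (r - 2 + t%:Z) * k%:Z - r * k%:Z = pik%:Z - ((2 - t) * k)%N%:Z.
  by rewrite PoszM -subzn //; ring.
by rewrite -eqz_mod_dvd !modz_nat pik_mod.
Qed.

Lemma trinomial_exponents (q d t j1 j2 : nat) : q.+1 = (3 * d)%N -> d = (2 * t)%N ->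
  (j1 < d)%N -> (j2 < d)%N ->
  (j2 = t + 2 * j1 %[mod d])%N -> (j1 + j2 + 1 = t %[mod d])%N ->
  (q %% 18 = 11 /\ 1 + 3 * j1 = q.+1 %/ 3 /\ 2 + 3 * j2 = q.+1 %/ 6)%N \/
  (q %% 18 = 5 /\ 1 + 3 * j1 = (2 * q.+1) %/ 3 /\ 2 + 3 * j2 = (5 * q.+1) %/ 6)%N.
Proof.
move=> q1_3d d_2t j1_lt j2_lt j2_mod j1j2_mod; have d_gt0 : (0 < d)%N by lia.
rewrite (modn_small j2_lt) in j2_mod; rewrite [RHS]modn_small in j1j2_mod; last by lia.
have q0_lt : ((t + 2 * j1) %/ d < 3)%N by rewrite ltn_divLR //; lia.
have q1_lt : ((j1 + j2 + 1) %/ d < 2)%N by rewrite ltn_divLR //; lia.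
move: (divn_eq (t + 2 * j1) d) (divn_eq (j1 + j2 + 1) d); rewrite -j2_mod j1j2_mod.
move: ((t + 2 * j1) %/ d)%N ((j1 + j2 + 1) %/ d)%N q0_lt q1_lt => [|[|[|?]]] [|[|?]] //= _ _;
  rewrite ?mul0n ?mul1n; lia.
Qed.

Theorem lemma4p8 (F : finFieldType) (p n q d : nat) (eps : F)
  (r : int) (a b : F) (j1 j2 : nat) (tau : nat -> nat) (lam : nat -> F) :
  prime p -> (0 < n)%N -> q = (p ^ n)%N -> #|F| = (q ^ 2)%N ->
  (d %| q.+1)%N -> d.-primitive_root eps ->
  (q.+1 %/ d = 3)%N ->
  a != 0 -> b != 0 -> (j1 < d)%N -> (j2 < d)%N ->
  let h : {poly F} := 1 + a *: 'X^(1 + 3 * j1) + b *: 'X^(2 + 3 * j2) in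
  let Lk (k : nat) : {poly F} :=
    1 + (a * eps ^+ (j1 * k)) *: 'X + (b * eps ^+ (j2 * k)) *: 'X^2 in
  let e (k : nat) : int := r - 2 + (tau k)%:Z in
  (forall k, (k < d)%N ->
     [/\ (tau k <= 2)%N, in_mu q (lam k),
         calL q d eps k 2 (tau k) (lam k) (Lk k) & coprimez (e k) 3]) ->
  (exists2 k, (k < d)%N & tau k = 0%N) ->
  (exists2 k, (k < d)%N & tau k = 2%N) ->
  [/\ (r = 1 %[mod 3])%Z, ~~ odd d,
      (forall k, (k < d)%N -> (tau k = 0%N <-> ~~ odd k) /\ (tau k = 2%N <-> odd k))
      \/ (forall k, (k < d)%N -> (tau k = 0%N <-> odd k) /\ (tau k = 2%N <-> ~~ odd k)),
      a ^+ 3 = -1 & b = a ^+ 2 \/ b = - a ^+ 2] /\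
  [/\ ((2 * j1)%:Z - j2%:Z = (d %/ 2)%N %[mod d])%Z,
      ((j1 + j2 + 1)%N = (d %/ 2)%N %[mod d])%Z &
      forall k pik, (k < d)%N -> lam k ^+ 3 = eps ^+ pik ->
        (pik%:Z + e k * k%:Z = r * k%:Z %[mod d])%Z] /\
  ((q %% 18 = 11)%N /\ h = 1 + a *: 'X^(q.+1 %/ 3) + b *: 'X^(q.+1 %/ 6)
   \/ (q %% 18 = 5)%N /\ h = 1 + a *: 'X^((2 * q.+1) %/ 3) + b *: 'X^((5 * q.+1) %/ 6)).
Proof.
move=> _ _ _ _ d_dvd eps_prim m3 a0 b0 j1_lt j2_lt h Lk e hyp [k0 k0_lt tau_k0] [k2 k2_lt tau_k2].
have q1_3d : q.+1 = (3 * d)%N by rewrite -m3 divnK.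
have L_spec k (k_lt : (k < d)%N) := let: And4 tau_le _ L_calL e_cop := hyp k k_lt in
  And3 tau_le L_calL e_cop.
have [r1 d_even [a3 b_sign] [eps_j2 eps_j1j2] per_k] :=
  quad_family_normal_form q1_3d eps_prim a0 b0 L_spec k0_lt tau_k0 k2_lt tau_k2.
set t := (d %/ 2)%N; have d_2t : d = (2 * t)%N by rewrite mulnC divnK // dvdn2.
have eps_t : eps ^+ t = -1 := prim_root_half eps_prim d_even.
have j2_mod : (j2 = t + 2 * j1 %[mod d])%N.
  by apply/eqP; rewrite -(eq_prim_root_expr eps_prim) exprD eps_t mulN1r eps_j2.
have j1j2_mod : (j1 + j2 + 1 = t %[mod d])%N.
  by apply/eqP; rewrite -(eq_prim_root_expr eps_prim) eps_t eps_j1j2.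
split; [split=> // | split; first split].
- by case: (odd k0) per_k => per_k; [right | left] => k /per_k[-> -> _] /=; rewrite ?negbK.
- by move: b_sign; rewrite -signr_odd; case: (odd k0) => ->; [right | left]; rewrite ?mulrN1 ?mulr1.
- exact: congr_half_sub d_2t j2_mod.
- by rewrite !modz_nat j1j2_mod.
- move=> k pik k_lt lam3; have [_ _ lamE] := per_k k k_lt.
  apply: congr_twist; first by have [] := hyp k k_lt.
  by apply/eqP; rewrite -(eq_prim_root_expr eps_prim) -lam3 lamE.
- have [[? [E1 E2]] | [? [E1 E2]]] :=
    trinomial_exponents q1_3d d_2t j1_lt j2_lt j2_mod j1j2_mod;
    [left | right]; by rewrite /h E1 E2.
Qed.
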